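(* Let $k$ be an algebraically closed field of characteristic $0$ and let $X$ be an affine $k$-variety. Then $\mathcal{O}_{ch}(X)\subseteq ML(X)$. In particular, if $ML(X)=k$ then $\mathcal{O}_{ch}(X)=k$.
   Context: For a $k$-morphism $g:\mathbb{A}^1_k\to X$, $\mathcal{O}_{ch,g}(X)=\{f\in\mathcal{O}(X): f\circ g\text{ is constant}\}$, and $\mathcal{O}_{ch}(X)=\bigcap_{g}\mathcal{O}_{ch,g}(X)$ over all $k$-morphisms $g:\mathbb{A}^1_k\to X$. A locally nilpotent $k$-derivation of $\mathcal{O}(X)$ is a $k$-linear derivation $D$ such that every element is killed by some power of $D$; $LND_k(\mathcal{O}(X))$ denotes the set of these. The Makar-Limanov invariant is $ML(X)=\bigcap_{D\in LND_k(\mathcal{O}(X))}\ker D$. *)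

From HB Require Import structures.
From mathcomp Require Import all_boot all_order all_algebra.
Set Implicit Arguments. Unset Strict Implicit. Unset Printing Implicit Defensive.
Import GRing.Theory.
Local Open Scope ring_scope.

(* An affine k-variety X is encoded by its coordinate ring O(X) = A:
   a commutative k-algebra that is finitely generated and an integral domain. *)

(* A is generated as a k-algebra by the finite sequence s:
   every predicate containing k, s and closed under + and * holds everywhere. *)
Definition fin_gen (k : fieldType) (A : comAlgType k) : Prop :=
  exists s : seq A, forall P : A -> Prop,
    (forall c : k, P (c%:A)) -> (forall x, x \in s -> P x) ->
    (forall x y, P x -> P y -> P (x + y)) ->
    (forall x y, P x -> P y -> P (x * y)) -> forall a, P a.

Definition is_domain (k : fieldType) (A : comAlgType k) : Prop :=
  (1 : A) != 0 /\ forall a b : A, a * b = 0 -> a = 0 \/ b = 0.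

Definition affine_coord_ring (k : fieldType) (A : comAlgType k) : Prop :=
  fin_gen A /\ is_domain A.

(* k-morphisms g : A^1_k -> X  <->  k-algebra morphisms g^* : O(X) -> k[t];
   f o g = g^*(f), constant iff it is a constant polynomial. *)
Definition Och_g (k : fieldType) (A : comAlgType k)
  (g : {lrmorphism A -> {poly k}}) (f : A) : Prop := (size (g f) <= 1)%N.

Definition Och (k : fieldType) (A : comAlgType k) (f : A) : Prop :=
  forall g : {lrmorphism A -> {poly k}}, Och_g g f.

Definition is_derivation (k : fieldType) (A : comAlgType k) (D : {linear A -> A}) :=
  forall a b : A, D (a * b) = a * D b + D a * b.

Definition is_LND (k : fieldType) (A : comAlgType k) (D : {linear A -> A}) :=
  is_derivation D /\ forall a : A, exists m : nat, iter m D a = 0.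

Definition ML (k : fieldType) (A : comAlgType k) (f : A) : Prop :=
  forall D : {linear A -> A}, is_LND D -> D f = 0.

Definition in_k (k : fieldType) (A : comAlgType k) (f : A) : Prop :=
  exists c : k, f = c%:A.

(* Let D be a locally nilpotent derivation with D f <> 0.  By the weak
   Nullstellensatz some k-point psi of X does not vanish at D f.  Then
   a |-> sum_i psi (D^i a) t^i / i!, i.e. exp (t D) followed by evaluation at
   psi, is a k-algebra morphism O(X) -> k[t] (Leibniz rule; the i! are
   invertible in characteristic 0), that is a curve A^1 -> X, and the linear
   coefficient of f along it is psi (D f) <> 0: f is not constant on the curve.

   The weak Nullstellensatz is obtained by adjoining the generators of O(X) one
   at a time: for v <> 0 in S[x] there is u <> 0 in S such that every k-point
   of S not vanishing at u extends to S[x] without vanishing at v.  When x is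
   transcendental over S we evaluate at a point where v does not vanish.  When
   g(x) = 0, the determinant trick applied to pseudo-remainders modulo g shows
   both that v divides a nonzero element of S and that the relations of x map
   to a proper ideal of k[t], whose generator has a root. *)

From HB Require Import structures.
From mathcomp Require Import all_boot all_order all_algebra perm.
From mathcomp Require Import ring.
From Stdlib Require Import ClassicalEpsilon.
Import GRing.Theory.
Local Open Scope ring_scope.
Set Implicit Arguments. Unset Strict Implicit. Unset Printing Implicit Defensive.

Lemma det_ind (R : comPzRingType) (P : R -> Prop) n (M : 'M[R]_n) :
  P 0 -> P 1 -> P (-1) -> (forall a b, P a -> P b -> P (a + b)) ->
  (forall a b, P a -> P b -> P (a * b)) -> (forall i j, P (M i j)) -> P (\det M).
Proof.
move=> P0 P1 PN1 PD PM PMij; apply: big_ind => // s _.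
apply: (PM); first by case: (odd_perm s); rewrite ?expr0 ?expr1.
by apply: big_ind => // j _; apply: PMij.
Qed.

Lemma det_eq0_of_kernel (R : comPzRingType) n (M : 'M[R]_n) (v : 'cV_n) (i : 'I_n) :
  M *m v = 0 -> v i 0 = 1 -> \det M = 0.
Proof.
move=> Mv0 vi1; have := congr1 (mulmx (\adj M)) Mv0.
rewrite mulmxA mul_adj_mx mulmx0 mul_scalar_mx => /matrixP /(_ i 0).
by rewrite !mxE vi1 mulr1.
Qed.

Lemma horner_low_coef (R : comNzRingType) (p : {poly R}) (y : R) m :
  (forall i, (i < m)%N -> p`_i = 0) ->
  p.[y] = y ^+ m * (p`_m + y * (drop_poly m.+1 p).[y]).
Proof.
move=> low; have pE : p = 'X^m * ((p`_m)%:P + 'X * drop_poly m.+1 p).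
  apply/polyP => i; rewrite coefXnM; case: ltnP => [/low //| le_mi].
  rewrite coefD coefXM coefC coef_drop_poly -(subnKC le_mi).
  case: (i - m)%N => [|j]; rewrite addKn; first by rewrite addn0 eqxx addr0.
  by rewrite /= add0r !addnS addnC.
by rewrite {1}pE hornerM hornerXn hornerD hornerC hornerM hornerX.
Qed.

Lemma lreg_low_coef (R : comNzRingType) (p : {poly R}) (y : R) :
  GRing.lreg y -> p != 0 -> p.[y] = 0 ->
  exists2 m, p`_m != 0 & p`_m = - (y * (drop_poly m.+1 p).[y]).
Proof.
move=> ry p0 py0.
have ex_nz : exists m, p`_m != 0.
  by exists (size p).-1; rewrite -lead_coefE lead_coef_eq0.
case: (ex_minnP ex_nz) => m pm0 min_m; exists m => //.
have low i : (i < m)%N -> p`_i = 0.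
  by move=> lt_im; apply/eqP; apply: contraTT lt_im => /min_m; rewrite -leqNgt.
move: py0; rewrite (horner_low_coef y low) => /eqP.
by rewrite (mulrI_eq0 _ (lregX ry)) addr_eq0 => /eqP.
Qed.

Lemma ex_minimal (P : nat -> Prop) :
  (exists n, P n) -> exists2 n, P n & forall m, P m -> (n <= m)%N.
Proof.
move=> exP; pose b n := if excluded_middle_informative (P n) then true else false.
have bP n : reflect (P n) (b n).
  by rewrite /b; case: excluded_middle_informative => ? ; constructor.
have [n Pn] := exP; have exb : exists n, b n by exists n; apply/bP.
by case: (ex_minnP exb) => m /bP Pm min_m; exists m => // j /bP /min_m.
Qed.

Lemma horner_char_poly (R : comNzRingType) n (M : 'M[R]_n) (y : R) :
  (char_poly M).[y] = \det (y%:M - M).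
Proof.
rewrite -horner_evalE /char_poly -det_map_mx; congr (\det _); apply/matrixP => i j.
by rewrite !mxE /= horner_evalE hornerD hornerN hornerMn hornerX hornerC.
Qed.

Lemma size_subr_cancel (R : nzRingType) n (p q : {poly R}) :
  (size p <= n.+1)%N -> (size q <= n.+1)%N -> p`_n = q`_n -> (size (p - q)%R <= n)%N.
Proof.
move=> le_p le_q pq_n; apply/leq_sizeP => j; rewrite leq_eqVlt coefB.
case/orP=> [/eqP <- | lt_nj]; first by rewrite pq_n subrr.
by rewrite !nth_default ?subrr // (leq_trans _ lt_nj).
Qed.

(** * Subalgebras and their k-points *)

Section SubalgebraPredicates.
Variables (k : fieldType) (A : comAlgType k).

Record subalg_closed (S : A -> Prop) : Prop := SubalgClosed {
  subalg_scalar : forall c : k, S c%:A;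
  subalgD : forall a b, S a -> S b -> S (a + b);
  subalgM : forall a b, S a -> S b -> S (a * b) }.

(* A k-point of S; its values outside S are irrelevant. *)
Record hom_on (S : A -> Prop) (phi : A -> k) : Prop := HomOn {
  hom_on_scalar : forall c : k, phi c%:A = c;
  hom_onD : forall a b, S a -> S b -> phi (a + b) = phi a + phi b;
  hom_onM : forall a b, S a -> S b -> phi (a * b) = phi a * phi b }.

Definition poly_on (S : A -> Prop) (p : {poly A}) : Prop := forall i, S p`_i.

Variable S : A -> Prop.
Hypothesis subS : subalg_closed S.

Lemma subalg_nat n : S n%:R.
Proof. by rewrite -scaler_nat; apply: (subalg_scalar subS). Qed.

Lemma subalg0 : S 0. Proof. exact: subalg_nat 0. Qed.
Lemma subalg1 : S 1. Proof. exact: subalg_nat 1. Qed.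

Lemma subalgN a : S a -> S (- a).
Proof.
move=> Sa; rewrite -scaleN1r -mulr_algl.
by apply: (subalgM subS) => //; apply: (subalg_scalar subS).
Qed.

Lemma subalgX a n : S a -> S (a ^+ n).
Proof.
move=> Sa; elim: n => [|n IH]; rewrite ?expr0 ?exprS; first exact: subalg1.
exact: (subalgM subS).
Qed.

Lemma subalg_sum (I : Type) (r : seq I) (P : pred I) (F : I -> A) :
  (forall i, P i -> S (F i)) -> S (\sum_(i <- r | P i) F i).
Proof. by move=> SF; apply: big_ind => //; [apply: subalg0 | apply: (subalgD subS)]. Qed.

Lemma subalg_prod (I : Type) (r : seq I) (P : pred I) (F : I -> A) :
  (forall i, P i -> S (F i)) -> S (\prod_(i <- r | P i) F i).
Proof. by move=> SF; apply: big_ind => //; [apply: subalg1 | apply: (subalgM subS)]. Qed.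

Lemma poly_onC a : S a -> poly_on S a%:P.
Proof. by move=> Sa i; rewrite coefC; case: eqP => _ //; apply: subalg0. Qed.

Lemma poly_on0 : poly_on S 0. Proof. by rewrite -polyC0; apply: poly_onC subalg0. Qed.
Lemma poly_on1 : poly_on S 1. Proof. by rewrite -polyC1; apply: poly_onC subalg1. Qed.
Lemma poly_onXn n : poly_on S 'X^n. Proof. by move=> i; rewrite coefXn; apply: subalg_nat. Qed.
Lemma poly_onX : poly_on S 'X. Proof. exact: poly_onXn 1. Qed.

Lemma poly_onD p q : poly_on S p -> poly_on S q -> poly_on S (p + q).
Proof. by move=> Sp Sq i; rewrite coefD; apply: (subalgD subS). Qed.

Lemma poly_onN p : poly_on S p -> poly_on S (- p).
Proof. by move=> Sp i; rewrite coefN; apply: subalgN. Qed.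

Lemma poly_onB p q : poly_on S p -> poly_on S q -> poly_on S (p - q).
Proof. by move=> Sp Sq; apply: poly_onD => //; apply: poly_onN. Qed.

Lemma poly_onM p q : poly_on S p -> poly_on S q -> poly_on S (p * q).
Proof. by move=> Sp Sq i; rewrite coefM; apply: subalg_sum => j _; apply: (subalgM subS). Qed.

Lemma poly_onZ a p : S a -> poly_on S p -> poly_on S (a *: p).
Proof. by move=> Sa Sp i; rewrite coefZ; apply: (subalgM subS). Qed.

Lemma subalg_horner p y : poly_on S p -> S y -> S p.[y].
Proof.
move=> Sp Sy; rewrite horner_coef; apply: subalg_sum => i _.
by apply: (subalgM subS) => //; apply: subalgX.
Qed.

Lemma poly_on_char_poly n (M : 'M[A]_n) :
  (forall i j, S (M i j)) -> poly_on S (char_poly M).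
Proof.
move=> SM; apply: det_ind => [|||||i j]; [exact: poly_on0 | exact: poly_on1 |
  exact: poly_onN poly_on1 | exact: poly_onD | exact: poly_onM |].
rewrite !mxE; apply: poly_onB; last exact: poly_onC.
by case: (i == j); [apply: poly_onX | apply: poly_on0].
Qed.

Variable phi : A -> k.
Hypothesis hom_phi : hom_on S phi.

Lemma hom_on_nat n : phi n%:R = n%:R.
Proof. by rewrite -scaler_nat (hom_on_scalar hom_phi). Qed.

Lemma hom_on0 : phi 0 = 0. Proof. exact: hom_on_nat 0. Qed.
Lemma hom_on1 : phi 1 = 1. Proof. exact: hom_on_nat 1. Qed.

Lemma hom_onZ c a : S a -> phi (c *: a) = c * phi a.
Proof.
move=> Sa; rewrite -mulr_algl (hom_onM hom_phi) ?(hom_on_scalar hom_phi) //.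
exact: (subalg_scalar subS).
Qed.

Lemma hom_onN a : S a -> phi (- a) = - phi a.
Proof. by move=> Sa; rewrite -scaleN1r hom_onZ // mulN1r. Qed.

Lemma hom_onB a b : S a -> S b -> phi (a - b) = phi a - phi b.
Proof. by move=> Sa Sb; rewrite (hom_onD hom_phi) ?hom_onN //; apply: subalgN. Qed.

Lemma hom_onX a n : S a -> phi (a ^+ n) = phi a ^+ n.
Proof.
move=> Sa; elim: n => [|n IH]; first by rewrite !expr0 hom_on1.
by rewrite !exprS (hom_onM hom_phi) ?IH //; apply: subalgX.
Qed.

Lemma hom_on_sum (I : Type) (r : seq I) (P : pred I) (F : I -> A) :
  (forall i, P i -> S (F i)) -> phi (\sum_(i <- r | P i) F i) = \sum_(i <- r | P i) phi (F i).
Proof.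
move=> SF; elim: r => [|a r IH]; first by rewrite !big_nil hom_on0.
rewrite !big_cons; case: ifP => // Pa.
by rewrite (hom_onD hom_phi) ?IH //; [apply: SF | apply: subalg_sum].
Qed.

Lemma hom_on_prod (I : Type) (r : seq I) (P : pred I) (F : I -> A) :
  (forall i, P i -> S (F i)) -> phi (\prod_(i <- r | P i) F i) = \prod_(i <- r | P i) phi (F i).
Proof.
move=> SF; elim: r => [|a r IH]; first by rewrite !big_nil hom_on1.
rewrite !big_cons; case: ifP => // Pa.
by rewrite (hom_onM hom_phi) ?IH //; [apply: SF | apply: subalg_prod].
Qed.

Lemma hom_on_det n (M : 'M[A]_n) : (forall i j, S (M i j)) ->
  phi (\det M) = \det (\matrix_(i, j) phi (M i j)).
Proof.
move=> SM; have SN1 : S (-1) := subalgN subalg1.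
have Ssign (s : {perm 'I_n}) : S ((-1) ^+ s) := subalgX _ SN1.
have Sprod (s : {perm 'I_n}) : S (\prod_i M i (s i)) by apply: subalg_prod.
rewrite /determinant hom_on_sum => [|s _]; last exact: (subalgM subS).
apply: eq_bigr => s _; rewrite (hom_onM hom_phi) // hom_onX // (hom_onN subalg1).
by rewrite hom_on1 hom_on_prod //; congr (_ * _); apply: eq_bigr => i _; rewrite mxE.
Qed.

Lemma coef_map_on p i : (map_poly phi p)`_i = phi p`_i.
Proof. by rewrite coef_map_id0 // hom_on0. Qed.

Lemma map_onC a : map_poly phi a%:P = (phi a)%:P.
Proof. by apply/polyP => i; rewrite coef_map_on !coefC; case: eqP; rewrite ?hom_on0. Qed.

Lemma map_onD p q : poly_on S p -> poly_on S q ->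
  map_poly phi (p + q) = map_poly phi p + map_poly phi q.
Proof.
by move=> Sp Sq; apply/polyP => i; rewrite coefD !coef_map_on coefD (hom_onD hom_phi).
Qed.

Lemma map_onB p q : poly_on S p -> poly_on S q ->
  map_poly phi (p - q) = map_poly phi p - map_poly phi q.
Proof. by move=> Sp Sq; apply/polyP => i; rewrite !coefB !coef_map_on coefB hom_onB. Qed.

Lemma map_onM p q : poly_on S p -> poly_on S q ->
  map_poly phi (p * q) = map_poly phi p * map_poly phi q.
Proof.
move=> Sp Sq; apply/polyP => i; rewrite coef_map_on !coefM hom_on_sum => [|j _].
  by apply: eq_bigr => j _; rewrite (hom_onM hom_phi) // !coef_map_on.
exact: (subalgM subS).
Qed.

End SubalgebraPredicates.

(** * The exponential curve of a locally nilpotent derivation *)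

Section IteratedDerivation.
Variables (k : fieldType) (A : comAlgType k) (D : {linear A -> A}).

Fixpoint derivn n : {linear A -> A} := if n is m.+1 then (D \o derivn m)%FUN else idfun.

Lemma derivnE n a : derivn n a = iter n D a.
Proof. by elim: n => //= n ->. Qed.

Hypothesis derD : is_derivation D.

Lemma derivation1 : D 1 = 0.
Proof.
have := derD 1 1; rewrite mulr1 mul1r mulr1 => /esym/(canRL (addrK _)).
by rewrite subrr.
Qed.

Lemma derivnM n a b :
  derivn n (a * b) = \sum_(j < n.+1) (derivn j a * derivn (n - j) b) *+ 'C(n, j).
Proof.
elim: n => [|n IH]; first by rewrite big_ord1 /= mulr1n.
have -> : derivn n.+1 (a * b) =
    \sum_(j < n.+1) (derivn j a * derivn (n.+1 - j) b) *+ 'C(n, j) +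
    \sum_(j < n.+1) (derivn j.+1 a * derivn (n - j) b) *+ 'C(n, j).
  rewrite /= IH linear_sum -big_split /=; apply: eq_bigr => j _.
  by rewrite linearMn derD -mulrnDl subSn // -ltnS.
rewrite big_ord_recl [RHS]big_ord_recl -addrA !bin0; congr (_ + _).
under [in RHS]eq_bigr => j _ do rewrite lift0 subSS binS mulrnDr.
rewrite big_split /= [in RHS](big_ord_recr n) /= bin_small // mulr0n addr0.
by congr (_ + _); apply: eq_bigr => j _; rewrite /bump /= add1n subSS.
Qed.

End IteratedDerivation.

Section ExponentialCurve.
Variables (k : fieldType) (A : comAlgType k) (D : {linear A -> A}) (psi : A -> k).
Hypotheses (lnd_D : is_LND D) (point_psi : hom_on (fun _ => True) psi).
Hypothesis char_k : [pchar k] =i pred0.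

Lemma derivn_nilpotent a : exists n, derivn D n a == 0.
Proof. by have [n Dn0] := proj2 lnd_D a; exists n; rewrite derivnE Dn0. Qed.

Definition nil_order a : nat := ex_minn (derivn_nilpotent a).

Lemma derivn_nil_order a n : (nil_order a <= n)%N -> derivn D n a = 0.
Proof.
rewrite /nil_order; case: ex_minnP => m /eqP Dm0 _ le_mn.
by rewrite -(subnK le_mn) derivnE iterD -!derivnE Dm0 linear0.
Qed.

Definition exp_curve (a : A) : {poly k} :=
  \poly_(i < nil_order a) (psi (derivn D i a) / i`!%:R).

Lemma coef_exp_curve a i : (exp_curve a)`_i = psi (derivn D i a) / i`!%:R.
Proof.
rewrite coef_poly; case: ltnP => // /derivn_nil_order ->.
by rewrite (hom_on0 point_psi) mul0r.
Qed.

Lemma exp_curve_is_nmod_morphism : nmod_morphism exp_curve.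
Proof.
split=> [|a b]; apply/polyP => i; rewrite ?coefD !coef_exp_curve.
  by rewrite linear0 (hom_on0 point_psi) coef0 mul0r.
by rewrite linearD (hom_onD point_psi) // mulrDl.
Qed.

Lemma exp_curve_is_scalable : scalable exp_curve.
Proof.
move=> c a; apply/polyP => i.
by rewrite coefZ !coef_exp_curve linearZ (hom_onZ _ point_psi) ?mulrA.
Qed.

Lemma exp_curve_is_monoid_morphism : monoid_morphism exp_curve.
Proof.
have natr_neq0 m : (0 < m)%N -> (m%:R : k) != 0.
  by move=> m_gt0; rewrite ((pcharf0P k).1 char_k) -lt0n.
split.
  apply/polyP => -[|i]; rewrite coef_exp_curve coef1 /=.
    by rewrite (hom_on1 point_psi) divr1.
  by rewrite derivnE -iterS iterSr (derivation1 (proj1 lnd_D)) -derivnE linear0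
    (hom_on0 point_psi) mul0r.
move=> a b; apply/polyP => n; rewrite coef_exp_curve coefM (derivnM (proj1 lnd_D)).
rewrite (hom_on_sum _ point_psi) // mulr_suml; apply: eq_bigr => j _.
rewrite !coef_exp_curve -mulr_natr !(hom_onM point_psi) // (hom_on_nat point_psi).
have le_jn : (j <= n)%N by rewrite -ltnS.
rewrite -[in n`!](bin_fact le_jn) !natrM.
have nz_fj := natr_neq0 _ (fact_gt0 j).
have nz_fnj := natr_neq0 _ (fact_gt0 (n - j)).
have nz_bin := natr_neq0 _ (etrans (bin_gt0 n j) le_jn).
by field; rewrite nz_fj nz_fnj nz_bin.
Qed.

HB.instance Definition _ :=
  GRing.isNmodMorphism.Build A {poly k} exp_curve exp_curve_is_nmod_morphism.
HB.instance Definition _ :=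
  GRing.isMonoidMorphism.Build A {poly k} exp_curve exp_curve_is_monoid_morphism.
HB.instance Definition _ :=
  GRing.isScalable.Build k A {poly k} *:%R exp_curve exp_curve_is_scalable.

Lemma exists_curve_with_derivative :
  exists g : {lrmorphism A -> {poly k}}, forall a, (g a)`_1 = psi (D a).
Proof. by exists exp_curve => a; rewrite coef_exp_curve divr1. Qed.

End ExponentialCurve.

(** * The weak Nullstellensatz *)

Section Adjunction.
Variables (k : fieldType) (A : comAlgType k).

Definition adjoin (S : A -> Prop) (x : A) (e : A) : Prop :=
  exists2 p, poly_on S p & e = p.[x].

Variables (S : A -> Prop) (x : A).
Hypothesis subS : subalg_closed S.

Lemma adjoin_base s : S s -> adjoin S x s.
Proof. by move=> Ss; exists s%:P; [apply: poly_onC | rewrite hornerC]. Qed.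

Lemma adjoin_gen : adjoin S x x.
Proof. by exists 'X; [apply: poly_onX | rewrite hornerX]. Qed.

Lemma subalg_adjoin : subalg_closed (adjoin S x).
Proof.
split=> [c | _ _ [p Sp ->] [q Sq ->]|_ _ [p Sp ->] [q Sq ->]].
- exact/adjoin_base/(subalg_scalar subS).
- by exists (p + q); [apply: poly_onD | rewrite hornerD].
- by exists (p * q); [apply: poly_onM | rewrite hornerM].
Qed.

Section PseudoRemainder.
Variable g : {poly A}.
Hypotheses (Sg : poly_on S g) (gx0 : g.[x] = 0).
Local Notation c := (lead_coef g).
Local Notation d := (size g).-1.

Lemma pseudo_remainder N r : poly_on S r -> (size r <= N + d)%N ->
  exists r', [/\ poly_on S r', (size r' <= d)%N, r'.[x] = c ^+ N * r.[x] &
    forall phi, hom_on S phi -> (forall i, phi r`_i = 0) -> forall i, phi r'`_i = 0].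
Proof.
have Sc : S c := Sg _.
elim: N r => [|N IH] r Sr le_r; first by exists r; rewrite expr0 mul1r.
have [le_r' | lt_r] := leqP (size r) (N + d).
  have [r' [Sr' le_r'd r'x kill_r']] := IH r Sr le_r'.
  exists (c *: r'); split.
  - exact (poly_onZ subS Sc Sr').
  - exact: leq_trans (size_scale_leq _ _) le_r'd.
  - by rewrite hornerZ r'x mulrA -exprS.
  - by move=> phi hom_phi kill_r i; rewrite coefZ (hom_onM hom_phi) ?kill_r' ?mulr0.
pose top := r`_(N + d).
pose r1 := c *: r - top *: ('X^N * g).
have SXg : poly_on S ('X^N * g) := poly_onM subS (poly_onXn subS N) Sg.
have Sr1 : poly_on S r1 := poly_onB subS (poly_onZ subS Sc Sr) (poly_onZ subS (Sr _) SXg).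
have le_r1 : (size r1 <= N + d)%N.
  apply: size_subr_cancel.
  - by rewrite (leq_trans (size_scale_leq _ _)) // -addSn.
  - rewrite (leq_trans (size_scale_leq _ _)) // (leq_trans (size_polyMleq _ _)) //.
    by rewrite size_polyXn addSn /= -addnS leq_add2l leqSpred.
  by rewrite coefZ coefZ coefXnM ltnNge leq_addr /= addKn mulrC.
have [r' [Sr' le_r'd r'x kill_r']] := IH r1 Sr1 le_r1.
exists r'; split => //.
  by rewrite r'x /r1 hornerD hornerN !hornerZ hornerM gx0 !mulr0 subr0 mulrA -exprSr.
move=> phi hom_phi kill_r; apply: (kill_r' phi hom_phi) => i.
rewrite coefB !coefZ.
rewrite (hom_onB subS hom_phi (subalgM subS Sc (Sr i)) (subalgM subS (Sr _) (SXg i))).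
rewrite (hom_onM hom_phi Sc (Sr i)) (hom_onM hom_phi (Sr _) (SXg i)).
by rewrite !kill_r mulr0 mul0r subr0.
Qed.

Definition powers_col n : 'cV[A]_n := \col_(j < n) x ^+ j.

Lemma reduction_matrix p : poly_on S p -> exists N (R : 'M[A]_d),
  [/\ forall i j, S (R i j), R *m powers_col d = (c ^+ N * p.[x]) *: powers_col d &
    forall phi, hom_on S phi -> (forall i, phi p`_i = 0) -> forall i j, phi (R i j) = 0].
Proof.
move=> Sp; pose N := size p.
have rows (i : 'I_d) : exists r, [/\ poly_on S r, (size r <= d)%N,
    r.[x] = c ^+ N * (p * 'X^i).[x] &
    forall phi, hom_on S phi -> (forall l, phi (p * 'X^i)`_l = 0) -> forall l, phi r`_l = 0].
  apply: pseudo_remainder; first exact (poly_onM subS Sp (poly_onXn subS i)).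
  rewrite (leq_trans (size_polyMleq _ _)) // size_polyXn addnS leq_add2l.
  exact: ltnW.
have [r r_spec] := fin_all_exists rows.
exists N, (\matrix_(i, j) (r i)`_j); split.
- by move=> i j; rewrite mxE; case: (r_spec i).
- apply/matrixP => i z; rewrite !mxE ord1.
  under eq_bigr => j _ do rewrite !mxE.
  case: (r_spec i) => _ le_rd rx _.
  by rewrite -(horner_coef_wide x le_rd) rx hornerM hornerXn mulrA.
- move=> phi hom_phi kill_p i j; rewrite mxE; case: (r_spec i) => _ _ _ -> // l.
  by rewrite coefMXn; case: ifP; rewrite ?(hom_on0 hom_phi).
Qed.

End PseudoRemainder.
End Adjunction.

Section ExtensionAtRoot.
Variables (k : fieldType) (A : comAlgType k) (S : A -> Prop) (x : A) (phi : A -> k) (a : k).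
Hypotheses (subS : subalg_closed S) (hom_phi : hom_on S phi).
Hypothesis ker_root : forall p, poly_on S p -> p.[x] = 0 -> (map_poly phi p).[a] = 0.

(* By [ker_root] the value does not depend on the representative chosen. *)
Definition extend_at (e : A) : k :=
  (map_poly phi (epsilon (inhabits 0) (fun p => poly_on S p /\ e = p.[x]))).[a].

Lemma extend_at_horner p : poly_on S p -> extend_at p.[x] = (map_poly phi p).[a].
Proof.
move=> Sp; rewrite /extend_at; set q := epsilon _ _.
have [Sq pq] : poly_on S q /\ p.[x] = q.[x].
  by apply: (epsilon_spec _ (fun q => poly_on S q /\ p.[x] = q.[x])); exists p.
apply/eqP; rewrite -subr_eq0 -hornerN -hornerD -(map_onB subS hom_phi Sq Sp).
apply/eqP/ker_root.
  exact (poly_onB subS Sq Sp).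
by rewrite hornerD hornerN pq subrr.
Qed.

Lemma extend_at_base s : S s -> extend_at s = phi s.
Proof.
move=> Ss; rewrite -(hornerC s x) extend_at_horner ?(map_onC hom_phi) ?hornerC //.
exact: poly_onC.
Qed.

Lemma hom_on_extend_at : hom_on (adjoin S x) extend_at.
Proof.
split=> [c | _ _ [p Sp ->] [q Sq ->] | _ _ [p Sp ->] [q Sq ->]].
- by rewrite (extend_at_base (subalg_scalar subS c)) (hom_on_scalar hom_phi).
- rewrite -hornerD !extend_at_horner ?(map_onD hom_phi) ?hornerD //.
  exact (poly_onD subS Sp Sq).
- rewrite -hornerM !extend_at_horner ?(map_onM subS hom_phi) ?hornerM //.
  exact (poly_onM subS Sp Sq).
Qed.

End ExtensionAtRoot.

Section ImageIdeal.
Variables (k : fieldType) (A : comAlgType k) (S : A -> Prop) (x : A) (g : {poly A}).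
Variable phi : A -> k.
Hypotheses (subS : subalg_closed S) (hom_phi : hom_on S phi).
Hypotheses (Sg : poly_on S g) (gx0 : g.[x] = 0) (phi_lc : phi (lead_coef g) != 0).

Definition image_ideal (h : {poly k}) : Prop :=
  exists2 p, poly_on S p /\ p.[x] = 0 & h = map_poly phi p.

Lemma image_idealD h1 h2 : image_ideal h1 -> image_ideal h2 -> image_ideal (h1 + h2).
Proof.
move=> [p [Sp px0] ->] [q [Sq qx0] ->].
exists (p + q); last by rewrite (map_onD hom_phi Sp Sq).
by split; [exact (poly_onD subS Sp Sq) | rewrite hornerD px0 qx0 addr0].
Qed.

Lemma image_idealMl r h : image_ideal h -> image_ideal (r * h).
Proof.
move=> [p [Sp px0] ->]; pose r' := map_poly (in_alg A) r.
have Sr' : poly_on S r' by move=> i; rewrite coef_map /=; apply: (subalg_scalar subS).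
have phi_r' : map_poly phi r' = r.
  by apply/polyP => i; rewrite (coef_map_on hom_phi) coef_map /= (hom_on_scalar hom_phi).
exists (r' * p); last by rewrite (map_onM subS hom_phi Sr' Sp) phi_r'.
by split; [exact (poly_onM subS Sr' Sp) | rewrite hornerM px0 mulr0].
Qed.

Lemma size_gt1 : (1 < size g)%N.
Proof.
rewrite ltnNge; apply/negP => /size1_polyC g_const.
have g0 : g`_0 = 0 by rewrite -(hornerC g`_0 x) -g_const.
by move: phi_lc; rewrite g_const lead_coefC g0 (hom_on0 hom_phi) eqxx.
Qed.

Lemma image_ideal_neq1 : ~ image_ideal 1.
Proof.
(* For q := p - 1 we have q.[x] = -1, so c ^+ N + R kills the powers of x and
   has determinant 0, whereas phi maps it to the scalar matrix phi c ^+ N. *)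
case=> p [Sp px0] phi_p1.
pose c := lead_coef g; pose d := (size g).-1.
have Sq : poly_on S (p - 1) := poly_onB subS Sp (poly_on1 subS).
have kill_q i : phi (p - 1)`_i = 0.
  rewrite coefB (hom_onB subS hom_phi (Sp i) (poly_on1 subS i)) coef1.
  by rewrite (hom_on_nat hom_phi) -(coef_map_on hom_phi p) -phi_p1 coef1 subrr.
have [N [R [SR RX kill_R]]] := reduction_matrix subS Sg gx0 Sq.
pose M := (c ^+ N)%:M + R.
have M0 : M *m powers_col x d = 0.
  rewrite mulmxDl RX mul_scalar_mx hornerD hornerN px0 hornerC sub0r mulrN1 scaleNr.
  by rewrite addrN.
have d_gt0 : (0 < d)%N by rewrite /d -subn1 subn_gt0 size_gt1.
have Sc : S c := Sg _.
have Sdiag (i j : 'I_d) : S (c ^+ N *+ (i == j)).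
  by case: (i == j); [apply: subalgX | apply: subalg0].
have phiM : \matrix_(i, j) phi (M i j) = (phi c ^+ N)%:M.
  apply/matrixP => i j; rewrite !mxE (hom_onD hom_phi (Sdiag i j) (SR i j)).
  rewrite (kill_R phi hom_phi kill_q) addr0.
  by case: (i == j); rewrite ?(hom_on0 hom_phi) // (hom_onX subS hom_phi).
have := det_eq0_of_kernel M0 (i := Ordinal d_gt0); rewrite mxE expr0 => /(_ erefl).
move/(congr1 phi); rewrite (hom_on_det subS hom_phi) => [|i j]; last first.
  by rewrite !mxE; apply: (subalgD subS).
rewrite phiM det_scalar (hom_on0 hom_phi) -exprM => /eqP.
by rewrite expf_eq0 (negbTE phi_lc) andbF.
Qed.

End ImageIdeal.

Section CommonRoot.
Variables (k : closedFieldType) (A : comAlgType k) (S : A -> Prop) (x : A) (g : {poly A}).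
Variable phi : A -> k.
Hypotheses (subS : subalg_closed S) (hom_phi : hom_on S phi).
Hypotheses (Sg : poly_on S g) (gx0 : g.[x] = 0) (phi_lc : phi (lead_coef g) != 0).

Lemma exists_common_root :
  exists a, forall p, poly_on S p -> p.[x] = 0 -> (map_poly phi p).[a] = 0.
Proof.
pose J := image_ideal S x phi.
have J_nz : exists n, exists2 h, J h /\ h != 0 & size h = n.
  exists (size (map_poly phi g)), (map_poly phi g) => //; split; first by exists g.
  rewrite -size_poly_eq0 (size_map_poly_id0 phi_lc) -lt0n.
  exact: ltnW (size_gt1 hom_phi gx0 phi_lc).
have [_ [h [Jh h_neq0] <-] min_h] := ex_minimal J_nz.
have size_h_neq1 : size h != 1%N.
  apply/eqP => /eqP/size_poly1P [c c_neq0 h_c].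
  apply: (image_ideal_neq1 subS hom_phi Sg gx0 phi_lc).
  by rewrite -polyC1 -(mulVf c_neq0) polyCM -h_c; apply: image_idealMl.
have [a /rootP ha] := closed_rootP h size_h_neq1.
exists a => p Sp px0; set q := map_poly phi p.
have Jq_mod : J (q %% h).
  have -> : q %% h = q + - (q %/ h) * h by rewrite {2}(divp_eq q h) mulNr addrC addKr.
  by apply: (image_idealD subS hom_phi); [exists p | apply: image_idealMl].
have q_mod0 : q %% h = 0.
  case: (eqVneq (q %% h) 0) => // q_mod_neq0.
  have := min_h _ (ex_intro2 _ _ _ (conj Jq_mod q_mod_neq0) erefl).
  by rewrite leqNgt ltn_modp h_neq0.
by rewrite (divp_eq q h) q_mod0 addr0 hornerM ha mulr0.
Qed.

End CommonRoot.

Section DomainAdjunction.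
Variables (k : fieldType) (A : comAlgType k).
Hypothesis domA : is_domain A.

Lemma domain_lreg (a : A) : a != 0 -> GRing.lreg a.
Proof.
move=> a_neq0; apply: mulrI0_lreg => b /(proj2 domA) [a0 | //].
by move: a_neq0; rewrite a0 eqxx.
Qed.

Variables (S : A -> Prop) (x : A) (g : {poly A}).
Hypotheses (subS : subalg_closed S) (Sg : poly_on S g) (gx0 : g.[x] = 0).
Hypothesis size_g : (1 < size g)%N.

Lemma adjoin_dvd_base p : poly_on S p -> p.[x] != 0 ->
  exists2 w, S w /\ w != 0 & exists2 h, adjoin S x h & w = p.[x] * h.
Proof.
move=> Sp px_neq0; pose c := lead_coef g; pose d := (size g).-1.
have Sc : S c := Sg _.
have [N [R [SR RX _]]] := reduction_matrix subS Sg gx0 Sp.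
pose y := c ^+ N * p.[x]; pose chi := char_poly R.
have reg_y : GRing.lreg y.
  apply: lregM; last exact: domain_lreg.
  by apply/lregX/domain_lreg; rewrite lead_coef_eq0 -size_poly_eq0 -lt0n ltnW.
have chi_y : chi.[y] = 0.
  have d_gt0 : (0 < d)%N by rewrite /d -subn1 subn_gt0.
  rewrite horner_char_poly (det_eq0_of_kernel (i := Ordinal d_gt0) (v := powers_col x d)) //.
    by rewrite mulmxBl mul_scalar_mx RX subrr.
  by rewrite mxE expr0.
have [m chi_m_neq0 chi_m] := lreg_low_coef reg_y (monic_neq0 (char_poly_monic R)) chi_y.
have subT := subalg_adjoin x subS.
have Sy : adjoin S x y.
  apply: (subalgM subT); last by exists p.
  by apply: (subalgX subT); apply: (adjoin_base x subS).
exists chi`_m; first by split => //; apply: poly_on_char_poly.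
exists (- (c ^+ N * (drop_poly m.+1 chi).[y])); last by rewrite chi_m /y; ring.
apply: (subalgN subT); apply: (subalgM subT).
  by apply: (subalgX subT); apply: (adjoin_base x subS).
apply: (subalg_horner subT) => // i; rewrite coef_drop_poly.
by apply: (adjoin_base x subS) => //; apply: poly_on_char_poly.
Qed.

End DomainAdjunction.

Definition lifts_nonvanishing (k : fieldType) (A : comAlgType k) (S T : A -> Prop) (u v : A) :=
  forall phi, hom_on S phi -> phi u != 0 -> exists2 psi, hom_on T psi & psi v != 0.

Lemma lifts_nonvanishing_trans (k : fieldType) (A : comAlgType k) (S T U : A -> Prop) u w v :
  lifts_nonvanishing S T u w -> lifts_nonvanishing T U w v -> lifts_nonvanishing S U u v.
Proof. by move=> STuw TUwv phi /STuw hom_u /hom_u [psi /TUwv]. Qed.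

Section ExtensionStep.
Variables (k : closedFieldType) (A : comAlgType k) (S : A -> Prop) (x : A).
Hypotheses (domA : is_domain A) (subS : subalg_closed S).

Lemma lifts_algebraic g p : poly_on S g -> g != 0 -> g.[x] = 0 ->
  poly_on S p -> p.[x] != 0 ->
  exists2 u, S u /\ u != 0 & lifts_nonvanishing S (adjoin S x) u p.[x].
Proof.
move=> Sg g_neq0 gx0 Sp px_neq0; have Sc : S (lead_coef g) := Sg _.
have size_g : (1 < size g)%N.
  rewrite ltnNge; apply: contra g_neq0 => /size1_polyC g_const.
  by move: gx0; rewrite g_const hornerC => ->.
have [w [Sw w_neq0] [h Sh w_ph]] := adjoin_dvd_base domA subS Sg gx0 size_g Sp px_neq0.
exists (lead_coef g * w).
  split; first exact: (subalgM subS).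
  by rewrite (mulrI_eq0 _ (domain_lreg domA _)) // lead_coef_eq0.
move=> phi hom_phi; rewrite (hom_onM hom_phi) // mulf_eq0 negb_or => /andP [phi_c phi_w].
have [a ker_a] := exists_common_root subS hom_phi Sg gx0 phi_c.
have hom_psi := hom_on_extend_at subS hom_phi ker_a.
exists (extend_at S x phi a) => //; apply: contraNneq phi_w => psi_px0.
rewrite -(extend_at_base subS hom_phi ker_a Sw) w_ph (hom_onM hom_psi) ?psi_px0 ?mul0r //.
by exists p.
Qed.

Lemma lifts_transcendental p : (forall g, poly_on S g -> g.[x] = 0 -> g = 0) ->
  poly_on S p -> p != 0 ->
  exists2 u, S u /\ u != 0 & lifts_nonvanishing S (adjoin S x) u p.[x].
Proof.
move=> x_transc Sp p_neq0.
exists (lead_coef p); first by split; [exact: Sp | rewrite lead_coef_eq0].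
move=> phi hom_phi phi_lc; set h := map_poly phi p.
have h_neq0 : h != 0 by rewrite -size_poly_eq0 size_map_poly_id0 // size_poly_eq0.
(* A root of [h * 'X - 1] is a point where [h] does not vanish. *)
have size_hX1 : size (h * 'X - 1) = (size h).+1.
  by rewrite size_polyDl size_mulX // size_polyN size_poly1 ltnS lt0n size_poly_eq0.
have [a /rootP] : exists a, root (h * 'X - 1) a.
  by apply/closed_rootP; rewrite size_hX1 eqSS size_poly_eq0.
rewrite hornerD hornerN hornerMX hornerC => ha.
have ker_a q : poly_on S q -> q.[x] = 0 -> (map_poly phi q).[a] = 0.
  by move=> Sq /(x_transc _ Sq) ->; rewrite map_poly0 horner0.
exists (extend_at S x phi a); first exact: hom_on_extend_at.
rewrite (extend_at_horner subS hom_phi ker_a Sp) -/h.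
by apply/eqP => h_a0; move/eqP: ha; rewrite h_a0 mul0r sub0r oppr_eq0 oner_eq0.
Qed.

Lemma lifts_adjoin v : adjoin S x v -> v != 0 ->
  exists2 u, S u /\ u != 0 & lifts_nonvanishing S (adjoin S x) u v.
Proof.
move=> [p Sp ->] v_neq0.
have [[g [Sg g_neq0 gx0]] | x_transc] :=
  classic (exists g, [/\ poly_on S g, g != 0 & g.[x] = 0]).
  exact: (lifts_algebraic Sg g_neq0 gx0).
apply: lifts_transcendental => //; last by apply: contraNneq v_neq0 => ->; rewrite horner0.
move=> g Sg gx0; case: (eqVneq g 0) => // g_neq0; case: x_transc; by exists g.
Qed.

End ExtensionStep.

Section Generators.
Variables (k : fieldType) (A : comAlgType k).

Fixpoint adjoin_seq (S : A -> Prop) (s : seq A) : A -> Prop :=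
  if s is x :: s' then adjoin_seq (adjoin S x) s' else S.

Lemma subalg_adjoin_seq s S : subalg_closed S -> subalg_closed (adjoin_seq S s).
Proof. by elim: s S => //= x s IH S subS; apply/IH/subalg_adjoin. Qed.

Lemma adjoin_seq_base s S a : subalg_closed S -> S a -> adjoin_seq S s a.
Proof.
elim: s S => //= x s IH S subS Sa.
by apply: IH; [apply: subalg_adjoin | apply: adjoin_base].
Qed.

Lemma adjoin_seq_gen s S a : subalg_closed S -> a \in s -> adjoin_seq S s a.
Proof.
elim: s S => //= x s IH S subS; rewrite in_cons => /predU1P [-> | a_s].
  by apply: adjoin_seq_base; [apply: subalg_adjoin | apply: adjoin_gen].
by apply: IH => //; apply: subalg_adjoin.
Qed.

End Generators.

Lemma lifts_adjoin_seq (k : closedFieldType) (A : comAlgType k) (S : A -> Prop) s v :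
  is_domain A -> subalg_closed S ->
  adjoin_seq S s v -> v != 0 ->
  exists2 u, S u /\ u != 0 & lifts_nonvanishing S (adjoin_seq S s) u v.
Proof.
move=> domA; elim: s S v => [|x s IH] S v subS /= Sv v_neq0.
  by exists v => // phi ? ?; exists phi.
have [w [Sw w_neq0] lift_wv] := IH _ _ (subalg_adjoin x subS) Sv v_neq0.
have [u Su lift_uw] := lifts_adjoin domA subS Sw w_neq0.
by exists u => //; apply: lifts_nonvanishing_trans lift_uw lift_wv.
Qed.

Definition scalar_coord (k : fieldType) (A : comAlgType k) (a : A) : k :=
  epsilon (inhabits 0) (fun c => a = c%:A).

Lemma hom_on_scalar_coord (k : fieldType) (A : comAlgType k) :
  hom_on (@in_k k A) (@scalar_coord k A).
Proof.
have inj_k : injective (fun c : k => c%:A : A) := fmorph_inj (in_alg A).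
have coordE (c : k) : scalar_coord (c%:A : A) = c.
  have := epsilon_spec (inhabits 0) (fun c' => c%:A = c'%:A :> A) (ex_intro _ c erefl).
  by move/inj_k/esym.
split=> // [_ _ [c ->] [c' ->] | _ _ [c ->] [c' ->]].
  by rewrite -scalerDl !coordE.
by rewrite -scalerAl mul1r scalerA !coordE.
Qed.

Lemma subalg_in_k (k : fieldType) (A : comAlgType k) : subalg_closed (@in_k k A).
Proof.
split=> [c | _ _ [c ->] [c' ->] | _ _ [c ->] [c' ->]]; first by exists c.
  by exists (c + c'); rewrite scalerDl.
by exists (c * c'); rewrite -scalerAl mul1r scalerA.
Qed.

Lemma sub_hom_on (k : fieldType) (A : comAlgType k) (S T : A -> Prop) (phi : A -> k) :
  (forall a, S a -> T a) -> hom_on T phi -> hom_on S phi.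
Proof. by move=> ST [? DT MT]; split=> // a b /ST Ta /ST Tb; [apply: DT | apply: MT]. Qed.

Theorem weak_nullstellensatz (k : closedFieldType) (A : comAlgType k) (v : A) :
  affine_coord_ring A -> v != 0 ->
  exists2 psi, hom_on (fun _ => True) psi & psi v != 0.
Proof.
case=> [[s gen] domA] v_neq0; have subk := @subalg_in_k k A.
have gen_s a : adjoin_seq (@in_k k A) s a.
  apply: gen => [c | y | y z | y z]; first by apply: adjoin_seq_base => //; exists c.
  - exact: adjoin_seq_gen.
  - exact: (subalgD (subalg_adjoin_seq s subk)).
  - exact: (subalgM (subalg_adjoin_seq s subk)).
have [_ [[c ->] c_neq0] lift] := lifts_adjoin_seq domA subk (gen_s v) v_neq0.
have [|psi hom_psi psi_v] := lift _ (hom_on_scalar_coord A).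
  rewrite (hom_on_scalar (hom_on_scalar_coord A)).
  by apply: contraNneq c_neq0 => ->; rewrite scale0r.
by exists psi => //; apply: sub_hom_on hom_psi.
Qed.

Theorem proposition6p10 (k : closedFieldType) (hchar : [pchar k] =i pred0)
  (A : comAlgType k) (hA : affine_coord_ring A) :
  (forall f : A, Och f -> ML f) /\
  ((forall f : A, ML f <-> in_k f) -> forall f : A, Och f <-> in_k f).
Proof.
have Och_ML (f : A) : Och f -> ML f.
  move=> Och_f D lnd_D; case: (eqVneq (D f) 0) => // Df_neq0.
  have [psi point_psi psi_Df] := weak_nullstellensatz hA Df_neq0.
  have [g g_coef1] := exists_curve_with_derivative lnd_D point_psi hchar.
  by move: psi_Df; rewrite -g_coef1 nth_default ?eqxx //; apply: Och_f.
split=> // ML_k f; split=> [/Och_ML/ML_k // | [c ->] g].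
by rewrite /Och_g linearZ rmorph1 (leq_trans (size_scale_leq _ _)) ?size_poly1.
Qed.
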